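(* Let $D$ and $H$ be finite sets of doctors and hospitals with $|D|\ge 2$, $|H|\ge 2$, and let $P$ be a profile with common preferences. For positive integers $l,k$, the homogeneous arrangement $(l,k)$ is adequate at $P$ if and only if $l=k$ or $l,k\ge\min\{|D|,|H|\}$.
   Context: Each $h\in H$ has a strict preference $P_h$ over $D\cup\{h\}$ and each $d\in D$ a strict preference $P_d$ over $H\cup\{d\}$ (ranking below oneself means unacceptable). $P$ has common preferences if all doctors rank the hospitals identically, all hospitals rank the doctors identically, every hospital is acceptable to every doctor and every doctor is acceptable to every hospital. A matching is $\mu:H\cup D\to H\cup D$ with $\mu(h)\in D\cup\{h\}$, $\mu(d)\in H\cup\{d\}$, $\mu(d)=h$ iff $\mu(h)=d$; it is stable if no pair $(d,h)$ has $h\mathrel{P_d}\mu(d)$ and $d\mathrel{P_h}\mu(h)$. An interview arrangement $(\iota,\kappa)$ gives each hospital an interview capacity $\iota_h\in\mathbb N$ and each doctor $\kappa_d\in\mathbb N$; the homogeneous arrangement $(l,k)$ has $\iota_h=l$ for all $h$ and $\kappa_d=k$ for all $d$. An interview matching is a many-to-many matching $\nu$ ($\nu(d)\subseteq H$, $\nu(h)\subseteq D$, $h\in\nu(d)$ iff $d\in\nu(h)$) respecting the capacities. The $(\iota,\kappa)$-matching at $P$: Step 1, $\nu$ is the hospital-optimal pairwise stable interview matching, computed by hospital-proposing deferred acceptance where each agent chooses from a set of proposals its acceptable partners if at most capacity many, else its capacity-many best; Step 2, the final matching is the outcome of doctor-proposing deferred acceptance with each agent $i$'s preference restricted to $\nu(i)$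 (only interviewed, acceptable agents are acceptable, ranked by $P_i$). The arrangement is adequate at $P$ if the resulting matching is stable with respect to $P$. *)

From mathcomp Require Import all_boot.
Set Implicit Arguments. Unset Strict Implicit. Unset Printing Implicit Defensive.

(* A strict preference of agent i over (other side) ∪ {i} is encoded by an
   injective ranking r : option X -> nat (smaller = better), where [None]
   stands for i itself.  x is acceptable iff r (Some x) < r None. *)
Record profile (D H : finType) := Profile {
  pd : D -> option H -> nat;
  ph : H -> option D -> nat;
  pd_inj : forall d, injective (pd d);
  ph_inj : forall h, injective (ph h) }.

Definition common_prefs (D H : finType) (P : profile D H) : Prop :=
  [/\ (forall d d' h1 h2,
         (pd P d (Some h1) < pd P d (Some h2)) = (pd P d' (Some h1) < pd P d' (Some h2))),
      (forall h h' d1 d2,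
         (ph P h (Some d1) < ph P h (Some d2)) = (ph P h' (Some d1) < ph P h' (Some d2))),
      (forall d h, pd P d (Some h) < pd P d None) &
      (forall d h, ph P h (Some d) < ph P h None)].

Definition choose (T : finType) (r : T -> nat) (acc : pred T) (cap : nat)
  (S : {set T}) : {set T} :=
  [set x in S | acc x && (#|[set y in S | acc y && (r y < r x)]| < cap)].

Section DA.
Variables (A B : finType).
Variables (rA : A -> B -> nat) (accA : A -> pred B) (capA : A -> nat).
Variables (rB : B -> A -> nat) (accB : B -> pred A) (capB : B -> nat).

(* R : set of pairs (a,b) such that b has rejected a. *)
Definition da_proposals (R : {set A * B}) (a : A) : {set B} :=
  choose (rA a) (accA a) (capA a) [set b | (a, b) \notin R].
Definition da_received (R : {set A * B}) (b : B) : {set A} :=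
  [set a | b \in da_proposals R a].
Definition da_held (R : {set A * B}) (b : B) : {set A} :=
  choose (rB b) (accB b) (capB b) (da_received R b).
Definition da_step (R : {set A * B}) : {set A * B} :=
  R :|: [set p | (p.2 \in da_proposals R p.1) && (p.1 \notin da_held R p.2)].
(* rejections only accumulate, so #|A|*#|B| rounds reach the fixed point *)
Definition da_rejections : {set A * B} := iter (#|A| * #|B|) da_step set0.
Definition DA : {set A * B} := [set p | p.1 \in da_held da_rejections p.2].
End DA.

Section Interview.
Variables (D H : finType) (P : profile D H).

Definition accD (d : D) (h : H) : bool := pd P d (Some h) < pd P d None.
Definition accH (h : H) (d : D) : bool := ph P h (Some d) < ph P h None.

Definition interview_matching (iota : H -> nat) (kappa : D -> nat) : {set H * D} :=
  DA (fun h d => ph P h (Some d)) accH iota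
     (fun d h => pd P d (Some h)) accD kappa.

Definition final_matching (iota : H -> nat) (kappa : D -> nat) : {set D * H} :=
  let nu := interview_matching iota kappa in
  DA (fun d h => pd P d (Some h)) (fun d h => ((h, d) \in nu) && accD d h) (fun _ => 1)
     (fun h d => ph P h (Some d)) (fun h d => ((h, d) \in nu) && accH h d) (fun _ => 1).

(* mu(d), mu(h) (None = matched to oneself). *)
Definition partnerD (mu : {set D * H}) (d : D) : option H := [pick h | (d, h) \in mu].
Definition partnerH (mu : {set D * H}) (h : H) : option D := [pick d | (d, h) \in mu].

Definition stable (mu : {set D * H}) : Prop :=
  forall d h, ~ ((pd P d (Some h) < pd P d (partnerD mu d)) /\
                 (ph P h (Some d) < ph P h (partnerH mu h))).

Definition adequate (iota : H -> nat) (kappa : D -> nat) : Prop :=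
  stable (final_matching iota kappa).

Definition homogeneous_adequate (l k : nat) : Prop :=
  adequate (fun _ => l) (fun _ => k).
End Interview.

From Pilot Require Import Defs.
From mathcomp Require Import all_boot zify.
Set Implicit Arguments. Unset Strict Implicit. Unset Printing Implicit Defensive.

(* With common preferences everything is governed by the common rankings of
   hospitals and doctors.  Step 1 produces a pairwise stable interview
   matching nu, Step 2 a one-to-one matching mu inside nu against which no
   interviewed pair blocks; a pair blocking mu therefore never interviewed.
   - If l, k >= min(|D|, |H|): for a blocking pair (h, d), say h holds l
     interviewees better than d.  Each of them is matched by mu to a hospital
     better than h, so l is below the ranks of both h and d, which are below
     min(|D|, |H|).
   - If l = k: nu consists of consecutive rank blocks of k hospitals and k
     doctors interviewing each other, and inside a block mu leaves nobody
     who could block.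
   - If l < k and l < min(|D|, |H|): the top l + 1 hospitals interview exactly
     the top l doctors, so one of them stays unmatched and blocks with any
     doctor outside the top l (symmetrically if k < l). *)

Section Choose.
Variables (T : finType) (r : T -> nat) (acc : pred T) (cap : nat).

Lemma mem_choose (S : {set T}) x : (x \in Defs.choose r acc cap S) =
  [&& x \in S, acc x & #|[set y in S | acc y && (r y < r x)]| < cap].
Proof. by rewrite inE. Qed.

Lemma choose_sub (S : {set T}) : Defs.choose r acc cap S \subset S.
Proof. by apply/subsetP => x; rewrite mem_choose => /and3P []. Qed.

Lemma choose_acc (S : {set T}) x : x \in Defs.choose r acc cap S -> acc x.
Proof. by rewrite mem_choose => /and3P []. Qed.

Lemma choose_subset (S S' : {set T}) x : S' \subset S -> x \in S' ->
  x \in Defs.choose r acc cap S -> x \in Defs.choose r acc cap S'.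
Proof.
move=> sS'S xS'; rewrite !mem_choose xS' => /and3P [_ -> lt_cap] /=.
apply: leq_ltn_trans lt_cap; apply: subset_leq_card; apply/subsetP => y.
by rewrite !inE => /andP [/(subsetP sS'S) -> ->].
Qed.

(* If z is the best acceptable element better than x that is not chosen,
   everything acceptable and better than z is chosen, so z is chosen too. *)
Lemma choose_cap_better (S : {set T}) x :
  cap <= #|[set y in S | acc y && (r y < r x)]| ->
  cap <= #|[set y in Defs.choose r acc cap S | r y < r x]|.
Proof.
set Y := [set y in S | _]; set C := [set y in _ | _] => capY.
rewrite leqNgt; apply/negP => ltC.
have sCY : C \subset Y.
  by apply/subsetP => y; rewrite !inE => /andP [/and3P [-> -> _] ->].
have /card_gt0P [z0 z0YC] : 0 < #|Y :\: C|.
  by rewrite cardsD (setIidPr sCY) subn_gt0 (leq_trans ltC capY).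
have [z zYC z_min] : exists2 z, z \in Y :\: C & forall y, y \in Y :\: C -> r z <= r y.
  by case: (arg_minnP r z0YC) => z; exists z.
move: zYC; rewrite in_setD => /andP [/negP zC]; rewrite inE => /andP [zS /andP [acc_z lt_zx]].
apply: zC; rewrite inE lt_zx andbT mem_choose zS acc_z /=.
apply: leq_ltn_trans ltC; apply: subset_leq_card; apply/subsetP => y.
rewrite inE => /andP [yS /andP [acc_y lt_yz]].
apply: contraT => yC; have := z_min y; rewrite leqNgt lt_yz; apply.
by rewrite in_setD yC /Y inE yS acc_y (ltn_trans lt_yz lt_zx).
Qed.

Lemma choose_card (r_inj : injective r) (S : {set T}) :
  #|Defs.choose r acc cap S| <= cap.
Proof.
set C := Defs.choose _ _ _ _; rewrite leqNgt; apply/negP => gt_cap.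
have /card_gt0P [z0 z0C] : 0 < #|C| by apply: leq_ltn_trans gt_cap.
have [z zC z_max] : exists2 z, z \in C & forall y, y \in C -> r y <= r z.
  by case: (arg_maxnP r z0C) => z; exists z.
move: (zC); rewrite mem_choose => /and3P [zS _]; apply/negP; rewrite -leqNgt -ltnS.
apply: leq_trans gt_cap _; rewrite (cardsD1 z) zC add1n ltnS.
apply: subset_leq_card; apply/subsetP => y; rewrite in_setD1 => /andP [yz yC].
move: (yC) (z_max y yC); rewrite mem_choose => /and3P [yS acc_y _] le_yz.
rewrite inE yS acc_y ltn_neqAle le_yz andbT.
by apply: contra yz => /eqP /r_inj ->.
Qed.

End Choose.

Section DeferredAcceptance.
Variables (A B : finType).
Variables (rA : A -> B -> nat) (accA : A -> pred B) (capA : A -> nat).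
Variables (rB : B -> A -> nat) (accB : B -> pred A) (capB : B -> nat).

Local Notation step := (da_step rA accA capA rB accB capB).
Local Notation proposals := (da_proposals rA accA capA).
Local Notation received := (da_received rA accA capA).
Local Notation held := (da_held rA accA capA rB accB capB).
Local Notation rejections := (da_rejections rA accA capA rB accB capB).
Local Notation M := (DA rA accA capA rB accB capB).

Lemma mem_da_step (R : {set A * B}) p : (p \in step R) =
  (p \in R) || ((p.2 \in proposals R p.1) && (p.1 \notin held R p.2)).
Proof. by rewrite in_setU inE. Qed.

Lemma subset_da_step (R : {set A * B}) : R \subset step R.
Proof. exact: subsetUl. Qed.

Lemma iter_da_step_fixed_or_large n :
  step (iter n step set0) = iter n step set0 \/ n <= #|iter n step set0|.
Proof.
elim: n => [|n [fixed|large]] /=; first by right.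
  by left; rewrite !fixed.
have [fixed | ne] := eqVneq (step (iter n step set0)) (iter n step set0).
  by left; rewrite !fixed.
right; apply: leq_ltn_trans large _; apply: proper_card.
by rewrite properEneq eq_sym ne subset_da_step.
Qed.

Lemma da_rejections_fixed : step rejections = rejections.
Proof.
have [// | large] := iter_da_step_fixed_or_large (#|A| * #|B|).
have -> : rejections = setT.
  by apply/eqP; rewrite eqEcard subsetT cardsT card_prod.
by apply/eqP; rewrite eqEsubset subsetT subset_da_step.
Qed.

Lemma da_proposals_unrejected (R : {set A * B}) a b :
  b \in proposals R a -> (a, b) \notin R.
Proof. by move/(subsetP (choose_sub _ _ _ _)); rewrite inE. Qed.

Lemma da_held_proposed (R : {set A * B}) a b : a \in held R b -> b \in proposals R a.
Proof. by move/(subsetP (choose_sub _ _ _ _)); rewrite inE. Qed.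

Lemma held_rejectionsE a b : (a \in held rejections b) = (b \in proposals rejections a).
Proof.
apply/idP/idP => [|prop_ab]; first exact: da_held_proposed.
apply: contraT => not_held.
have : (a, b) \in step rejections by rewrite mem_da_step /= prop_ab not_held orbT.
by rewrite da_rejections_fixed (negbTE (da_proposals_unrejected prop_ab)).
Qed.

Lemma da_held_received_step (R : {set A * B}) b : held R b \subset received (step R) b.
Proof.
apply/subsetP => a held_ab; have prop_ab := da_held_proposed held_ab.
rewrite inE; apply: (choose_subset _ _ prop_ab).
- by apply/subsetP => b'; rewrite !inE; apply: contra => ->.
- by rewrite inE mem_da_step /= prop_ab held_ab orbF da_proposals_unrejected.
Qed.

Lemma da_held_cap_step (R : {set A * B}) b a :
  capB b <= #|[set a' in held R b | rB b a' < rB b a]| ->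
  capB b <= #|[set a' in held (step R) b | rB b a' < rB b a]|.
Proof.
move=> capR; apply: choose_cap_better; apply: (leq_trans capR); apply: subset_leq_card.
apply/subsetP => a' /setIdP [held_a' lt_a']; apply/setIdP; split.
  exact: (subsetP (da_held_received_step R b)).
by rewrite lt_a' (choose_acc held_a').
Qed.

Definition rejections_justified (R : {set A * B}) := forall a b,
  (a, b) \in R -> accB b a -> capB b <= #|[set a' in held R b | rB b a' < rB b a]|.

Lemma rejections_justified_step R :
  rejections_justified R -> rejections_justified (step R).
Proof.
move=> just a b; rewrite mem_da_step /= => /orP [rej | /andP [prop_ab not_held]] acc_ba.
  exact: da_held_cap_step (just _ _ rej acc_ba).
apply/da_held_cap_step/choose_cap_better.
by move: not_held; rewrite mem_choose inE prop_ab acc_ba /= -leqNgt.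
Qed.

Lemma rejections_justified_da : rejections_justified rejections.
Proof.
rewrite /da_rejections; elim: (#|A| * #|B|) => [a b|n IH] /=; first by rewrite inE.
exact: rejections_justified_step.
Qed.

Lemma mem_DA_held a b : ((a, b) \in M) = (a \in held rejections b).
Proof. by rewrite inE. Qed.

Lemma mem_DA_proposed a b : ((a, b) \in M) = (b \in proposals rejections a).
Proof. by rewrite mem_DA_held held_rejectionsE. Qed.

Lemma DA_accA a b : (a, b) \in M -> accA a b.
Proof. by rewrite mem_DA_proposed => /choose_acc. Qed.

Lemma DA_capA (rA_inj : forall a, injective (rA a)) a :
  #|[set b | (a, b) \in M]| <= capA a.
Proof.
rewrite (eq_card (B := proposals rejections a)); first exact: choose_card.
by move=> b; rewrite inE mem_DA_proposed.
Qed.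

Lemma DA_capB (rB_inj : forall b, injective (rB b)) b :
  #|[set a | (a, b) \in M]| <= capB b.
Proof.
rewrite (eq_card (B := held rejections b)); first exact: choose_card.
by move=> a; rewrite inE mem_DA_held.
Qed.

(* A mutually acceptable unmatched pair was either rejected by b, which then
   holds capB b better proposals, or never proposed to, because a holds capA a
   better ones. *)
Lemma DA_stable a b : (a, b) \notin M -> accA a b -> accB b a ->
  capA a <= #|[set b' | ((a, b') \in M) && (rA a b' < rA a b)]| \/
  capB b <= #|[set a' | ((a', b) \in M) && (rB b a' < rB b a)]|.
Proof.
move=> not_ab acc_ab acc_ba.
have [rej | not_rej] := boolP ((a, b) \in rejections).
  right; rewrite (eq_card (B := [set a' in held rejections b | rB b a' < rB b a])).
    exact: rejections_justified_da.
  by move=> a'; rewrite !inE.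
left; rewrite (eq_card (B := [set b' in proposals rejections a | rA a b' < rA a b])).
  apply: choose_cap_better.
  by move: not_ab; rewrite mem_DA_proposed mem_choose inE not_rej acc_ab /= -leqNgt.
by move=> b'; rewrite [LHS]in_set [RHS]in_set mem_DA_proposed.
Qed.

End DeferredAcceptance.

Lemma count_iota_prefix (p : pred nat) c n : c <= n ->
  count (fun i => p i && (i < c)) (iota 0 n) = count p (iota 0 c).
Proof.
move=> le_cn; rewrite -(subnKC le_cn) iotaD count_cat add0n.
rewrite (@eq_in_count _ _ pred0 (iota c _)) ?count_pred0 ?addn0; last first.
  by move=> i; rewrite mem_iota leqNgt => /andP [/negbTE -> _]; rewrite andbF.
by apply: eq_in_count => i; rewrite mem_iota /= => ->; rewrite andbT.
Qed.

Lemma count_iota_divn k q n : 0 < k ->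
  count (fun i => i %/ k == q) (iota 0 n) = minn k (n - q * k).
Proof.
move=> k_gt0; elim: n => [|n IH]; first by rewrite sub0n minn0.
rewrite -addn1 iotaD count_cat IH /= add0n addn0.
have -> : (n %/ k == q) = (q * k <= n < q * k + k).
  by rewrite eqn_leq andbC leq_divRL // -[n %/ k <= q]ltnS ltn_divLR // mulSn addnC.
by move: (q * k) => m; case: (boolP (m <= n < m + k)) => /=; lia.
Qed.

Lemma ltn_minn_sub_mul k c q : 0 < k -> (minn k (c - q * k) < k) = (c %/ k <= q).
Proof. by move=> k_gt0; rewrite -[_ <= q]ltnS ltn_divLR // mulSn; move: (q * k); lia. Qed.

Lemma leq_card_rel (T U : finType) (R : T -> U -> bool) (A : {set T}) (B : {set U}) :
  (forall x, x \in A -> exists2 y, y \in B & R x y) ->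
  (forall x x' y, R x y -> R x' y -> x = x') -> #|A| <= #|B|.
Proof.
move=> rel_AB R_inj; pose f x := [pick y in B | R x y].
have fS x : x \in A -> exists2 y, f x = Some y & (y \in B) && R x y.
  move=> xA; rewrite /f; case: pickP => [y yB | none]; first by exists y.
  by have [y yB Rxy] := rel_AB x xA; have := none y; rewrite yB Rxy.
rewrite -(card_in_imset (f := f)); last first.
  move=> x x' /fS [y -> /andP [_ Rxy]] /fS [y' -> /andP [_ Rx'y']] [eq_yy'].
  by apply: R_inj Rxy _; rewrite eq_yy'.
rewrite -(card_imset B Some_inj); apply: subset_leq_card.
by apply/subsetP => _ /imsetP [x /fS [y -> /andP [yB _]] ->]; apply: imset_f.
Qed.

Lemma exists_unrelated (T U : finType) (R : T -> U -> bool) (A : {set T}) (B : {set U}) :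
  (forall x y, x \in A -> R x y -> y \in B) ->
  (forall x x' y, R x y -> R x' y -> x = x') ->
  #|B| < #|A| -> exists2 x, x \in A & forall y, ~~ R x y.
Proof.
move=> R_AB R_inj ltBA.
have [/existsP [x /andP [xA /forallP free_x]] | all_related] :=
  boolP [exists x, (x \in A) && [forall y, ~~ R x y]]; first by exists x.
suff : #|A| <= #|B| by rewrite leqNgt ltBA.
apply: leq_card_rel R_inj => x xA.
move: all_related; rewrite negb_exists => /forallP /(_ x).
rewrite xA negb_forall => /existsP [y /negPn Rxy].
by exists y => //; apply: R_AB Rxy.
Qed.

Record ranking (T : finType) (r : T -> nat) : Prop := Ranking {
  ranking_inj : injective r;
  ranking_lt : forall x, r x < #|T| }.

Section Ranking.
Variables (T : finType) (r : T -> nat).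
Hypothesis r_rank : ranking r.

Lemma card_ranking (p : pred nat) : #|[set x | p (r x)]| = count p (iota 0 #|T|).
Proof.
have [r_inj r_lt] := r_rank.
have uniq_r : uniq (map r (enum T)) by rewrite (map_inj_uniq r_inj) enum_uniq.
have sub_r : {subset map r (enum T) <= iota 0 #|T|}.
  by move=> _ /mapP [x _ ->]; rewrite mem_iota r_lt.
have size_r : size (iota 0 #|T|) <= size (map r (enum T)).
  by rewrite size_map size_iota cardT.
have [_ eq_r] := uniq_min_size uniq_r sub_r size_r.
rewrite -(permP (uniq_perm uniq_r (iota_uniq 0 #|T|) eq_r)) count_map.
rewrite cardsE cardE /enum_mem size_filter count_filter.
by apply: eq_count => x; rewrite /= andbT.
Qed.

Lemma card_rank_lt c : c <= #|T| -> #|[set x | r x < c]| = c.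
Proof.
move=> le_cT; rewrite (card_ranking (fun i => i < c)).
by rewrite -[RHS](size_iota 0) -count_predT -(count_iota_prefix predT le_cT).
Qed.

Lemma card_rank_lt_rank (p : pred T) y : #|[set x | p x && (r x < r y)]| <= r y.
Proof.
rewrite -{2}(card_rank_lt (ltnW (ranking_lt r_rank y))).
by apply: subset_leq_card; apply/subsetP => x; rewrite !inE => /andP [].
Qed.

Lemma exists_rank_ge c : c < #|T| -> exists x, c <= r x.
Proof.
move=> lt_cT; have := cardsC [set x | r x < c].
rewrite card_rank_lt ?(ltnW lt_cT) // => card_c.
have /card_gt0P [x] : 0 < #|~: [set x | r x < c]| by lia.
by rewrite !inE -leqNgt; exists x.
Qed.

Lemma card_rank_block_lt k q c : 0 < k -> c <= #|T| ->
  #|[set x | (r x %/ k == q) && (r x < c)]| = minn k (c - q * k).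
Proof.
move=> k_gt0 le_cT; rewrite (card_ranking (fun i => (i %/ k == q) && (i < c))).
by rewrite count_iota_prefix // count_iota_divn.
Qed.

Lemma card_rank_block k q : 0 < k -> #|[set x | r x %/ k == q]| = minn k (#|T| - q * k).
Proof.
move=> k_gt0; rewrite -card_rank_block_lt //; apply: eq_card => x.
by rewrite !inE ranking_lt // andbT.
Qed.

End Ranking.

Definition rk (T : finType) (r : T -> nat) (x : T) : nat := #|[set y | r y < r x]|.

Section Rk.
Variables (T : finType) (r : T -> nat).
Hypothesis r_inj : injective r.

Lemma rk_lt x y : r y < r x -> rk r y < rk r x.
Proof.
move=> lt_yx; apply: proper_card; apply/properP; split.
  by apply/subsetP => z; rewrite !inE => /ltn_trans; apply.
by exists y; rewrite !inE ?ltnn.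
Qed.

Lemma rk_ltE x y : (rk r y < rk r x) = (r y < r x).
Proof.
apply/idP/idP; last exact: rk_lt.
case: (ltngtP (r y) (r x)) => [// | /rk_lt lt_xy | /r_inj -> ]; last by rewrite ltnn.
by rewrite ltnNge (ltnW lt_xy).
Qed.

Lemma ranking_rk : ranking (rk r).
Proof.
split.
  move=> x y eq_rk; apply: r_inj.
  by case: (ltngtP (r x) (r y)) => // /rk_lt; rewrite eq_rk ltnn.
move=> x; apply: proper_card; apply/properP; split; first exact: subset_predT.
by exists x; rewrite ?inE ?ltnn.
Qed.

End Rk.

Lemma card_better_lt (T : finType) (p : pred T) (r : T -> nat) x :
  p x -> #|[set y | p y && (r y < r x)]| < #|[set y | p y]|.
Proof.
move=> px; apply: proper_card; apply/properP; split.
  by apply/subsetP => y; rewrite !inE => /andP [].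
by exists x; rewrite !inE ?px ?ltnn.
Qed.

Record pairwise_stable (X Y : finType) (rX : X -> nat) (rY : Y -> nat)
    (cX cY : nat) (nu : X -> Y -> bool) : Prop := PairwiseStable {
  pairwise_stable_capX : forall x, #|[set y | nu x y]| <= cX;
  pairwise_stable_capY : forall y, #|[set x | nu x y]| <= cY;
  pairwise_stable_full : forall x y, ~~ nu x y ->
    cX <= #|[set y' | nu x y' && (rY y' < rY y)]| \/
    cY <= #|[set x' | nu x' y && (rX x' < rX x)]| }.

Record stable_within (X Y : finType) (rX : X -> nat) (rY : Y -> nat)
    (nu mu : X -> Y -> bool) : Prop := StableWithin {
  mu_sub_nu : forall x y, mu x y -> nu x y;
  mu_uniqX : forall x y y', mu x y -> mu x y' -> y = y';
  mu_uniqY : forall x x' y, mu x y -> mu x' y -> x = x';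
  mu_stable_in_nu : forall x y, nu x y -> ~~ mu x y ->
    (exists2 y', mu x y' & rY y' < rY y) \/ (exists2 x', mu x' y & rX x' < rX x) }.

Definition blocking (X Y : finType) (rX : X -> nat) (rY : Y -> nat)
    (mu : X -> Y -> bool) (x : X) (y : Y) : Prop :=
  (forall y', mu x y' -> rY y < rY y') /\ (forall x', mu x' y -> rX x < rX x').

Section Transpose.
Variables (X Y : finType) (rX : X -> nat) (rY : Y -> nat) (cX cY : nat).
Variables (nu mu : X -> Y -> bool).

Lemma pairwise_stable_tr : pairwise_stable rX rY cX cY nu ->
  pairwise_stable rY rX cY cX (fun y x => nu x y).
Proof. by case=> capX capY full; split=> // y x /full []; [right | left]. Qed.

Lemma stable_within_tr : stable_within rX rY nu mu ->
  stable_within rY rX (fun y x => nu x y) (fun y x => mu x y).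
Proof.
case=> sub uniqX uniqY stab.
split=> [y x /sub // | y x x' | y y' x | y x nu_xy /(stab _ _ nu_xy) []].
- exact: uniqY.
- exact: uniqX.
- by right.
- by left.
Qed.

Lemma blocking_tr x y : blocking rX rY mu x y -> blocking rY rX (fun y x => mu x y) y x.
Proof. by case. Qed.

End Transpose.

Section OneSided.
Variables (X Y : finType) (rX : X -> nat) (rY : Y -> nat) (cX cY : nat).
Variables (nu mu : X -> Y -> bool).
Hypotheses (rX_rank : ranking rX) (rY_rank : ranking rY).
Hypotheses (nu_ps : pairwise_stable rX rY cX cY nu) (mu_sw : stable_within rX rY nu mu).
Local Notation blocking := (blocking rX rY mu).

Lemma pairwise_stableE x y : nu x y =
  (#|[set y' | nu x y' && (rY y' < rY y)]| < cX) &&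
  (#|[set x' | nu x' y && (rX x' < rX x)]| < cY).
Proof.
apply/idP/idP => [nu_xy | /andP [ltX ltY]].
  have ltX := card_better_lt rY nu_xy.
  have ltY := card_better_lt (p := fun x' => nu x' y) rX nu_xy.
  rewrite (leq_trans ltX (pairwise_stable_capX nu_ps x)).
  by rewrite (leq_trans ltY (pairwise_stable_capY nu_ps y)).
by apply: contraT => /(pairwise_stable_full nu_ps) []; rewrite leqNgt ?ltX ?ltY.
Qed.

Lemma blocking_notin_nu x y : blocking x y -> ~~ nu x y.
Proof.
move=> [better_y better_x]; apply/negP => nu_xy.
have not_mu : ~~ mu x y by apply/negP => /better_x; rewrite ltnn.
have [[y' /better_y lt1 lt2] | [x' /better_x lt1 lt2]] := mu_stable_in_nu mu_sw nu_xy not_mu.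
  by have := ltn_trans lt1 lt2; rewrite ltnn.
by have := ltn_trans lt1 lt2; rewrite ltnn.
Qed.

(* Each x' interviewed by y and better than x is matched to some y' better
   than y, and distinct x' get distinct y'. *)
Lemma card_better_le_rank x y : blocking x y ->
  #|[set x' | nu x' y && (rX x' < rX x)]| <= rY y.
Proof.
move=> [_ better_x].
rewrite -(card_rank_lt rY_rank (ltnW (ranking_lt rY_rank y))).
apply: (leq_card_rel (R := mu)) (mu_uniqY mu_sw) => x'.
rewrite inE => /andP [nu_x'y lt_x'x].
have not_mu : ~~ mu x' y.
  by apply/negP => /better_x; rewrite ltnNge (ltnW lt_x'x).
have [[y' mu_x'y' lt_y'y] | [x'' /better_x lt1 lt2]] := mu_stable_in_nu mu_sw nu_x'y not_mu.
  by exists y'; rewrite ?inE.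
by have := ltn_trans lt1 (ltn_trans lt2 lt_x'x); rewrite ltnn.
Qed.

Section EqualCaps.
Variable k : nat.
Hypotheses (k_gt0 : 0 < k) (cX_k : cX = k) (cY_k : cY = k).

Lemma nu_blocks x y : nu x y = (rX x %/ k == rY y %/ k).
Proof.
move: {2}(rX x + rY y).+1 (ltnSn (rX x + rY y)) => n.
elim: n x y => [// | n IH] x y lt_n.
have cardY : #|[set y' | nu x y' && (rY y' < rY y)]| = minn k (rY y - rX x %/ k * k).
  rewrite -(card_rank_block_lt rY_rank _ k_gt0 (ltnW (ranking_lt rY_rank y))).
  apply: eq_card => y'; rewrite !inE.
  have [lt_y'y|] := ltnP (rY y') (rY y); rewrite ?andbF // !andbT eq_sym IH //; lia.
have cardX : #|[set x' | nu x' y && (rX x' < rX x)]| = minn k (rX x - rY y %/ k * k).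
  rewrite -(card_rank_block_lt rX_rank _ k_gt0 (ltnW (ranking_lt rX_rank x))).
  apply: eq_card => x'; rewrite !inE.
  have [lt_x'x|] := ltnP (rX x') (rX x); rewrite ?andbF // !andbT IH //; lia.
by rewrite pairwise_stableE cardY cardX cX_k cY_k !ltn_minn_sub_mul // eqn_leq andbC.
Qed.

(* If x's block precedes y's, then x is unmatched, and the full block of Y
   with x's index cannot be matched into the rest of x's block, so it
   contains an unmatched agent interviewing x. *)
Lemma no_blocking_of_block_lt x y : rX x %/ k < rY y %/ k -> ~ blocking x y.
Proof.
set q := rX x %/ k => lt_blocks [better_y _].
have x_free y' : ~~ mu x y'.
  apply/negP => mu_xy'; have := better_y _ mu_xy'; apply/negP; rewrite -leqNgt.
  have := nu_blocks x y'; rewrite (mu_sub_nu mu_sw mu_xy') -/q => /esym/eqP q_y'.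
  by apply: ltnW; rewrite ltnNge; apply: contraL lt_blocks => /(leq_div2r k); rewrite q_y' -leqNgt.
have card_Yq : #|[set y' | rY y' %/ k == q]| = k.
  rewrite card_rank_block //; have := ranking_lt rY_rank y.
  have : q.+1 * k <= rY y by rewrite -leq_divRL.
  by rewrite mulSn; move: (q * k) => m; lia.
have card_Xq : #|[set x' | rX x' %/ k == q]| <= k by rewrite card_rank_block // geq_minl.
have [y' Yq_y' y'_free] : exists2 y', y' \in [set y' | rY y' %/ k == q] & forall x', ~~ mu x' y'.
  apply: (exists_unrelated (R := fun y x => mu x y) (B := [set x' | rX x' %/ k == q] :\ x)).
  - move=> y' x'; rewrite !inE => /eqP Yq_y' mu_x'y'.
    have := nu_blocks x' y'; rewrite (mu_sub_nu mu_sw mu_x'y') Yq_y' => /esym ->.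
    by rewrite andbT; apply: contraTneq mu_x'y' => ->.
  - by move=> y1 y2 x'; apply: (mu_uniqX mu_sw).
  - by rewrite card_Yq; move: card_Xq; rewrite (cardsD1 x) inE eqxx; lia.
have nu_xy' : nu x y' by rewrite nu_blocks; move: Yq_y'; rewrite inE eq_sym.
have [[y'' mu_xy'' _] | [x' mu_x'y' _]] := mu_stable_in_nu mu_sw nu_xy' (x_free y').
  by move: (x_free y''); rewrite mu_xy''.
by move: (y'_free x'); rewrite mu_x'y'.
Qed.

End EqualCaps.

Lemma exists_blocking_of_lt : cX < cY -> cX < #|X| -> cX < #|Y| ->
  exists x y, blocking x y.
Proof.
move=> lt_cXY lt_cX_X lt_cX_Y.
pose XT := [set x | rX x < cX.+1]; pose YT := [set y | rY y < cX].
have card_XT : #|XT| = cX.+1 := card_rank_lt rX_rank lt_cX_X.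
have card_YT : #|YT| = cX := card_rank_lt rY_rank (ltnW lt_cX_Y).
have nu_top x y : x \in XT -> y \in YT -> nu x y.
  rewrite !inE => x_top y_top; apply: contraT => /(pairwise_stable_full nu_ps) [].
    by have := card_rank_lt_rank rY_rank (nu x) y; lia.
  by have := card_rank_lt_rank rX_rank (fun x' => nu x' y) x; lia.
have nu_top_only x y : x \in XT -> nu x y -> y \in YT.
  move=> x_top nu_xy; apply: contraT => y_low.
  have : #|y |: YT| <= #|[set y' | nu x y']|.
    apply/subset_leq_card/subsetP => y'; rewrite in_setU1 inE.
    by case/orP => [/eqP -> // | /(nu_top _ _ x_top)].
  by rewrite cardsU1 y_low card_YT add1n; have := pairwise_stable_capX nu_ps x; lia.
have [x x_top x_free] : exists2 x, x \in XT & forall y, ~~ mu x y.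
  apply: (exists_unrelated (B := YT)) (mu_uniqY mu_sw) _; last by rewrite card_XT card_YT.
  by move=> x y x_top /(mu_sub_nu mu_sw); apply: nu_top_only.
have [y y_low] := exists_rank_ge rY_rank lt_cX_Y.
exists x, y; split=> [y' | x' mu_x'y]; first by rewrite (negbTE (x_free y')).
have x'_low : x' \notin XT.
  apply/negP => /nu_top_only /(_ (mu_sub_nu mu_sw mu_x'y)); rewrite inE; lia.
by move: x_top x'_low; rewrite !inE; lia.
Qed.

End OneSided.

Section TwoSided.
Variables (X Y : finType) (rX : X -> nat) (rY : Y -> nat) (cX cY : nat).
Variables (nu mu : X -> Y -> bool).
Hypotheses (rX_rank : ranking rX) (rY_rank : ranking rY).
Hypotheses (nu_ps : pairwise_stable rX rY cX cY nu) (mu_sw : stable_within rX rY nu mu).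
Local Notation blocking := (blocking rX rY mu).

Lemma no_blocking_of_min x y :
  minn #|X| #|Y| <= cX -> minn #|X| #|Y| <= cY -> ~ blocking x y.
Proof.
move=> le_cX le_cY block_xy.
have := ranking_lt rX_rank x; have := ranking_lt rY_rank y.
have [fullX | fullY] := pairwise_stable_full nu_ps (blocking_notin_nu mu_sw block_xy).
  have := card_better_le_rank rX_rank (stable_within_tr mu_sw) (blocking_tr block_xy).
  by have := card_rank_lt_rank rY_rank (nu x) y; lia.
have := card_better_le_rank rY_rank mu_sw block_xy.
by have := card_rank_lt_rank rX_rank (fun x' => nu x' y) x; lia.
Qed.

Lemma no_blocking_of_eq x y : 0 < cX -> cX = cY -> ~ blocking x y.
Proof.
move=> cX_gt0 eq_c block_xy.
have [lt_blocks | gt_blocks | eq_blocks] := ltngtP (rX x %/ cX) (rY y %/ cX).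
- exact: (no_blocking_of_block_lt rX_rank rY_rank nu_ps mu_sw cX_gt0
    (erefl cX) (esym eq_c) lt_blocks block_xy).
- exact: (no_blocking_of_block_lt rY_rank rX_rank (pairwise_stable_tr nu_ps)
    (stable_within_tr mu_sw) cX_gt0 (esym eq_c) (erefl cX) gt_blocks (blocking_tr block_xy)).
- have := blocking_notin_nu mu_sw block_xy.
  by rewrite (nu_blocks rX_rank rY_rank nu_ps cX_gt0 (erefl cX) (esym eq_c)) eq_blocks eqxx.
Qed.

Lemma no_blocking_iff : 0 < cX -> (forall x y, ~ blocking x y) <->
  cX = cY \/ (minn #|X| #|Y| <= cX /\ minn #|X| #|Y| <= cY).
Proof.
move=> cX_gt0; split=> [no_block | [eq_c | [le_cX le_cY]] x y]; last first.
- exact: no_blocking_of_min.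
- exact: no_blocking_of_eq.
have [lt_cXY | lt_cYX | ->] := ltngtP cX cY; last by left.
- right; suff le_cX : minn #|X| #|Y| <= cX by split; last exact: leq_trans le_cX (ltnW lt_cXY).
  rewrite leqNgt leq_min; apply/andP => -[lt_X lt_Y].
  have [x [y]] := exists_blocking_of_lt rX_rank rY_rank nu_ps mu_sw lt_cXY lt_X lt_Y.
  exact: no_block.
- right; suff le_cY : minn #|X| #|Y| <= cY by split; first exact: leq_trans le_cY (ltnW lt_cYX).
  rewrite leqNgt leq_min; apply/andP => -[lt_X lt_Y].
  have [y [x /blocking_tr]] := exists_blocking_of_lt rY_rank rX_rank
    (pairwise_stable_tr nu_ps) (stable_within_tr mu_sw) lt_cYX lt_Y lt_X.
  exact: no_block.
Qed.

End TwoSided.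

Section CommonPreferences.
Variables (D H : finType) (P : profile D H).
Hypothesis P_common : common_prefs P.
Variables (d0 : D) (h0 : H).

Lemma ph_Some_inj h : injective (fun d => ph P h (Some d)).
Proof. by move=> d d' /(@ph_inj _ _ P h) []. Qed.

Lemma pd_Some_inj d : injective (fun h => pd P d (Some h)).
Proof. by move=> h h' /(@pd_inj _ _ P d) []. Qed.

Definition rankD : D -> nat := rk (fun d => ph P h0 (Some d)).
Definition rankH : H -> nat := rk (fun h => pd P d0 (Some h)).

Lemma ranking_rankD : ranking rankD.
Proof. exact/ranking_rk/ph_Some_inj. Qed.

Lemma ranking_rankH : ranking rankH.
Proof. exact/ranking_rk/pd_Some_inj. Qed.

Lemma ph_ltE h d d' : (ph P h (Some d) < ph P h (Some d')) = (rankD d < rankD d').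
Proof.
by case: P_common => _ same_ph _ _; rewrite (same_ph h h0) /rankD rk_ltE //; apply: ph_Some_inj.
Qed.

Lemma pd_ltE d h h' : (pd P d (Some h) < pd P d (Some h')) = (rankH h < rankH h').
Proof.
by case: P_common => same_pd _ _ _; rewrite (same_pd d d0) /rankH rk_ltE //; apply: pd_Some_inj.
Qed.

Lemma accD_common d h : accD P d h.
Proof. by case: P_common => _ _ + _; apply. Qed.

Lemma accH_common h d : accH P h d.
Proof. by case: P_common => _ _ _; apply. Qed.

Variables (l k : nat).
Local Notation nu := (interview_matching P (fun _ => l) (fun _ => k)).
Local Notation mu := (final_matching P (fun _ => l) (fun _ => k)).

Lemma interview_pairwise_stable :
  pairwise_stable rankH rankD l k (fun h d => (h, d) \in nu).
Proof.
split=> [h | d | h d not_nu]; first exact: DA_capA ph_Some_inj h.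
  exact: DA_capB pd_Some_inj d.
have better_ph : [set d' | ((h, d') \in nu) && (ph P h (Some d') < ph P h (Some d))] =
                 [set d' | ((h, d') \in nu) && (rankD d' < rankD d)].
  by apply/setP => d'; rewrite [LHS]in_set [RHS]in_set ph_ltE.
have better_pd : [set h' | ((h', d) \in nu) && (pd P d (Some h') < pd P d (Some h))] =
                 [set h' | ((h', d) \in nu) && (rankH h' < rankH h)].
  by apply/setP => h'; rewrite [LHS]in_set [RHS]in_set pd_ltE.
by rewrite -better_ph -better_pd; apply: DA_stable not_nu (accH_common h d) (accD_common d h).
Qed.

Lemma final_stable_within :
  stable_within rankH rankD (fun h d => (h, d) \in nu) (fun h d => (d, h) \in mu).
Proof.
have capD d : #|[set h | (d, h) \in mu]| <= 1 := DA_capA _ _ _ _ _ pd_Some_inj d.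
have capH h : #|[set d | (d, h) \in mu]| <= 1 := DA_capB _ _ _ _ _ ph_Some_inj h.
split=> [h d /DA_accA /andP [] // | h d d' mu_dh mu_d'h | h h' d mu_dh mu_dh' | h d nu_hd not_mu].
- by apply: (card_le1_eqP (capH h)); rewrite inE.
- by apply: (card_le1_eqP (capD d)); rewrite inE.
have acc_dh : ((h, d) \in nu) && accD P d h by rewrite nu_hd accD_common.
have acc_hd : ((h, d) \in nu) && accH P h d by rewrite nu_hd accH_common.
have [] := DA_stable not_mu acc_dh acc_hd => /card_gt0P [x]; rewrite inE => /andP [mu_x lt_x].
  by right; exists x; rewrite // -(pd_ltE d).
by left; exists x; rewrite // -(ph_ltE h).
Qed.

Lemma lt_partnerD d h : pd P d (Some h) < pd P d (partnerD mu d) <->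
  (forall h', (d, h') \in mu -> rankH h < rankH h').
Proof.
rewrite /partnerD; case: pickP => [h' mu_dh' | unmatched].
  rewrite pd_ltE; split=> [lt_hh' h'' mu_dh'' | ]; last exact.
  by rewrite (mu_uniqY final_stable_within mu_dh'' mu_dh').
by split=> [_ h' | _]; [rewrite unmatched | exact: accD_common].
Qed.

Lemma lt_partnerH h d : ph P h (Some d) < ph P h (partnerH mu h) <->
  (forall d', (d', h) \in mu -> rankD d < rankD d').
Proof.
rewrite /partnerH; case: pickP => [d' mu_d'h | unmatched].
  rewrite ph_ltE; split=> [lt_dd' d'' mu_d''h | ]; last exact.
  by rewrite (mu_uniqX final_stable_within mu_d''h mu_d'h).
by split=> [_ d' | _]; [rewrite unmatched | exact: accH_common].
Qed.

Lemma stable_final_iff :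
  stable P mu <-> forall h d, ~ blocking rankH rankD (fun h d => (d, h) \in mu) h d.
Proof.
split=> [stab h d [better_d better_h] | no_block d h [/lt_partnerD ? /lt_partnerH ?]].
  by apply: (stab d h); split; [apply/lt_partnerD | apply/lt_partnerH].
exact: (no_block h d).
Qed.

End CommonPreferences.

Unset Implicit Arguments.

Theorem proposition2 (D H : finType) (P : profile D H) (l k : nat) :
  2 <= #|D| -> 2 <= #|H| -> common_prefs P -> 0 < l -> 0 < k ->
  (homogeneous_adequate P l k <->
   (l = k \/ (minn #|D| #|H| <= l /\ minn #|D| #|H| <= k))).
Proof.
move=> card_D card_H P_common l_gt0 _.
have /card_gt0P [d0 _] := ltnW card_D.
have /card_gt0P [h0 _] := ltnW card_H.
rewrite /homogeneous_adequate /adequate (stable_final_iff P_common d0 h0) minnC.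
exact: (no_blocking_iff (ranking_rankH P d0) (ranking_rankD P h0)
  (interview_pairwise_stable P_common d0 h0 l k) (final_stable_within P_common d0 h0 l k) l_gt0).
Qed.
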